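(* Let $X$ be a uniform space with base point $x_0$. The end-point projection $\pi_X\colon\widetilde X\to X$ is a uniform covering map if and only if $X$ is a uniform Poincar\'e space.
   Context: $B(x,E)=\{y:(x,y)\in E\}$, $f(E)=\{(f(x),f(y)):(x,y)\in E\}$. $\widetilde X$ is the set of homotopy classes rel. end-points of paths in $X$ starting at $x_0$, $\pi_X([\alpha])=\alpha(1)$, with the basic uniform structure whose base consists of the sets $E^\ast$ of pairs $([\alpha],[\beta])$ such that $\alpha^{-1}\ast\beta$ is homotopic rel. end-points to a path in some $B(z,E)$. A surjection $f$ generates the uniform structure on its range if the sets $f(E)$ form a base of it. The Rips complex $R(X,E)$ has vertex set $X$ and simplices the finite $F$ with $F\times F\subset E$; $f$ is a uniform covering map if it generates the uniform structure on its range and the entourages $E$ for which the induced simplicial map $f_E\colon R(X,E)\to R(Y,f(E))$ is a topological covering map form a base. $X$ is a uniform Poincar\'e space if it is path-connected, uniformly locally path-connected (for each entourage $E$ there is an entourage $F$ such that for all $x$ any two points of $B(x,F)$ are joined by a path in $B(x,E)$) and uniformly semi-locally simply connected (there is an entourage $F$ such that for every $x\in X$ every loop in $B(x,F)$ at $x$ is null-homotopic in $X$). *)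

From Stdlib Require Import Reals List ClassicalEpsilon.
Import ListNotations.
Open Scope R_scope.


Record UniformSpace := {
  us_car :> Type;
  ent : (us_car -> us_car -> Prop) -> Prop;
  ent_full : ent (fun _ _ => True);
  ent_mono : forall E F, ent E -> (forall x y, E x y -> F x y) -> ent F;
  ent_inter : forall E F, ent E -> ent F -> ent (fun x y => E x y /\ F x y);
  ent_refl : forall E, ent E -> forall x, E x x;
  ent_sym : forall E, ent E -> ent (fun x y => E y x);
  ent_comp : forall E, ent E ->
     exists F, ent F /\ forall x y z, F x y -> F y z -> E x z
}.

Definition ball {A : Type} (x : A) (E : A -> A -> Prop) : A -> Prop := fun y => E x y.

Definition rel_image {A B : Type} (f : A -> B) (E : A -> A -> Prop) : B -> B -> Prop :=
  fun y1 y2 => exists a b, E a b /\ f a = y1 /\ f b = y2.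

(** * Paths, represented as functions R -> X of which only the values on
      [0,1] matter *)
Definition I01 (t : R) : Prop := 0 <= t <= 1.

Definition path_cont (X : UniformSpace) (a : R -> X) : Prop :=
  forall t, I01 t -> forall E, ent X E ->
    exists d, 0 < d /\ forall s, I01 s -> Rabs (s - t) < d -> E (a t) (a s).

Definition path_from (X : UniformSpace) (x y : X) (a : R -> X) : Prop :=
  path_cont X a /\ a 0 = x /\ a 1 = y.

Definition homotopic_rel (X : UniformSpace) (a b : R -> X) : Prop :=
  exists H : R -> R -> X,
    (forall s t, I01 s -> I01 t -> forall E, ent X E ->
       exists d, 0 < d /\ forall s' t', I01 s' -> I01 t' ->
         Rabs (s' - s) < d -> Rabs (t' - t) < d -> E (H s t) (H s' t')) /\
    (forall s, I01 s -> H s 0 = a s) /\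
    (forall s, I01 s -> H s 1 = b s) /\
    (forall t, I01 t -> H 0 t = a 0 /\ H 1 t = a 1).

Definition rev_path {X : Type} (a : R -> X) : R -> X := fun t => a (1 - t).
Definition concat {X : Type} (a b : R -> X) : R -> X :=
  fun t => if Rle_dec t (1/2) then a (2 * t) else b (2 * t - 1).

(** * The space X~ of homotopy classes rel. end-points of paths starting at x0.
      An element is an equivalence class, i.e. a set of paths. *)
Definition is_class (X : UniformSpace) (x0 : X) (C : (R -> X) -> Prop) : Prop :=
  exists a, path_cont X a /\ a 0 = x0 /\
    forall b, C b <-> (path_cont X b /\ b 0 = x0 /\ homotopic_rel X a b).

Definition Xtilde (X : UniformSpace) (x0 : X) : Type :=
  { C : (R -> X) -> Prop | is_class X x0 C }.

Definition rep (X : UniformSpace) (x0 : X) (C : Xtilde X x0) : R -> X :=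
  epsilon (inhabits (fun _ : R => x0)) (fun a => proj1_sig C a).

Definition piX (X : UniformSpace) (x0 : X) (C : Xtilde X x0) : X :=
  rep X x0 C 1.

Definition Estar (X : UniformSpace) (x0 : X) (E : X -> X -> Prop)
  (C D : Xtilde X x0) : Prop :=
  exists a b, proj1_sig C a /\ proj1_sig D b /\
    exists (z : X) (g : R -> X), path_cont X g /\
      (forall t, I01 t -> ball z E (g t)) /\
      homotopic_rel X (concat (rev_path a) b) g.

Definition ent_tilde (X : UniformSpace) (x0 : X)
  (F : Xtilde X x0 -> Xtilde X x0 -> Prop) : Prop :=
  exists E, ent X E /\ forall C D, Estar X x0 E C D -> F C D.

(** A point of |R(A,E)| is a function w : A -> R (barycentric coordinates),
      non-negative, with finite support which is a simplex, summing to 1. *)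
Definition support_in {A : Type} (w : A -> R) (l : list A) : Prop :=
  forall x, w x <> 0 -> In x l.

Definition sumR (l : list R) : R := fold_right Rplus 0 l.

Definition rips_pt {A : Type} (E : A -> A -> Prop) (w : A -> R) : Prop :=
  (forall x, 0 <= w x) /\
  (forall x y, w x <> 0 -> w y <> 0 -> E x y) /\
  exists l, NoDup l /\ support_in w l /\ sumR (map w l) = 1.

(** Weak (CW) topology: U is open iff its trace on every closed simplex is
    open in the standard topology of that simplex. *)
Definition rips_open {A : Type} (E : A -> A -> Prop) (U : (A -> R) -> Prop) : Prop :=
  (forall w, U w -> rips_pt E w) /\
  forall l : list A, (forall x y, In x l -> In y l -> E x y) ->
    forall w, U w -> support_in w l ->
      exists d, 0 < d /\ forall w', rips_pt E w' -> support_in w' l ->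
        (forall x, In x l -> Rabs (w' x - w x) < d) -> U w'.

(** The simplicial map induced by f, extended affinely:
    (push f w)(y) = sum of w(x) over x with f x = y. *)
Definition push {A B : Type} (f : A -> B) (w : A -> R) (y : B) : R :=
  epsilon (inhabits 0)
    (fun r => exists l : list A, NoDup l /\ support_in w l /\
       r = sumR (map (fun x => if excluded_middle_informative (f x = y)
                               then w x else 0) l)).

(** * Topological covering maps between spaces given as subsets P, P'
      of ambient types, with their families of open sets. *)
Definition image {T T' : Type} (p : T -> T') (W : T -> Prop) : T' -> Prop :=
  fun y => exists x, W x /\ p x = y.

Definition top_covering {T T' : Type}
  (P : T -> Prop) (openT : (T -> Prop) -> Prop)
  (P' : T' -> Prop) (openT' : (T' -> Prop) -> Prop) (p : T -> T') : Prop :=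
  (forall x, P x -> P' (p x)) /\
  (forall y, P' y -> exists x, P x /\ p x = y) /\
  (forall V, openT' V -> openT (fun x => P x /\ V (p x))) /\
  forall y, P' y -> exists V, openT' V /\ V y /\
    exists S : (T -> Prop) -> Prop,
      (forall U, S U ->
         openT U /\
         (forall x x', U x -> U x' -> p x = p x' -> x = x') /\
         (forall y', V y' <-> image p U y') /\
         (forall W, openT W -> (forall x, W x -> U x) -> openT' (image p W))) /\
      (forall x, (P x /\ V (p x)) <-> exists U, S U /\ U x) /\
      (forall U U', S U -> S U' -> (exists x, U x /\ U' x) ->
         forall x, U x <-> U' x).

Definition generates {A B : Type}
  (entA : (A -> A -> Prop) -> Prop) (entB : (B -> B -> Prop) -> Prop)
  (f : A -> B) : Prop :=
  (forall y, exists x, f x = y) /\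
  (forall E, entA E -> entB (rel_image f E)) /\
  (forall F, entB F -> exists E, entA E /\
     forall y1 y2, rel_image f E y1 y2 -> F y1 y2).

Definition uniform_covering {A B : Type}
  (entA : (A -> A -> Prop) -> Prop) (entB : (B -> B -> Prop) -> Prop)
  (f : A -> B) : Prop :=
  generates entA entB f /\
  forall F, entA F -> exists E, entA E /\ (forall a b, E a b -> F a b) /\
    top_covering (rips_pt E) (rips_open E)
                 (rips_pt (rel_image f E)) (rips_open (rel_image f E))
                 (push f).

Definition path_connected (X : UniformSpace) : Prop :=
  forall x y : X, exists a, path_from X x y a.

Definition unif_loc_path_connected (X : UniformSpace) : Prop :=
  forall E, ent X E -> exists F, ent X F /\
    forall (x y z : X), ball x F y -> ball x F z ->
      exists a, path_from X y z a /\ forall t, I01 t -> ball x E (a t).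

Definition unif_semiloc_simply_connected (X : UniformSpace) : Prop :=
  exists F, ent X F /\
    forall (x : X) (a : R -> X), path_from X x x a ->
      (forall t, I01 t -> ball x F (a t)) ->
      homotopic_rel X a (fun _ => x).

Definition uniform_Poincare (X : UniformSpace) : Prop :=
  path_connected X /\ unif_loc_path_connected X /\
  unif_semiloc_simply_connected X.

(* (<=) For a symmetric entourage E0 whose fourth power lies inside an
   entourage F witnessing uniform semi-local simple connectivity, E0^* is
   reflexive, pi-injective on E0^*-balls, "triangle closed" and has the
   lifting property for pi(E0^* )-steps.  An abstract criterion
   ([rips_covering_criterion]) shows that these four properties make the
   induced map of Rips complexes R(X~, E0^* ) -> R(X, pi(E0^* )) a covering map:
   the sheets over the open star of a vertex are the open stars of its lifts.
   Path connectivity gives surjectivity and uniform local path connectivity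
   shows that pi(E^* ) is an entourage.

   (=>) Surjectivity of pi gives path connectivity, pi(E^* ) being an entourage
   gives uniform local path connectivity, and a covering R(X~,E) -> R(X,pi(E))
   cannot identify two E-close points (the edge between them would be a path
   in the Rips complex leaving a sheet), which gives uniform semi-local simple
   connectivity. *)
From Pilot Require Import Defs.
From Stdlib Require Import Reals List ClassicalEpsilon Lra Classical
  FunctionalExtensionality PropExtensionality ProofIrrelevance.
Import ListNotations.
Open Scope R_scope.

Notation pconcat := Defs.concat.

Lemma I01_0 : I01 0. Proof. unfold I01; lra. Qed.
Lemma I01_1 : I01 1. Proof. unfold I01; lra. Qed.
#[local] Hint Resolve I01_0 I01_1 : core.

Ltac rabs_elim :=
  repeat match goal with
  | |- context [Rabs ?x] => destruct (Rle_or_lt 0 x);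
      [rewrite (Rabs_pos_eq x) by lra | rewrite (Rabs_left x) by lra]
  | H : context [Rabs ?x] |- _ => destruct (Rle_or_lt 0 x);
      [rewrite (Rabs_pos_eq x) in H by lra | rewrite (Rabs_left x) in H by lra]
  end.
Ltac dec_elim := repeat match goal with
  | |- context [Rle_dec ?x ?y] => destruct (Rle_dec x y)
  | H : context [Rle_dec ?x ?y] |- _ => destruct (Rle_dec x y)
  end.

Section PathOps.
Variable A : Type.
Implicit Types p q : R -> A.

Lemma concat_0 p q : pconcat p q 0 = p 0.
Proof. unfold pconcat, Defs.concat. destruct (Rle_dec 0 (1/2)); [|lra]. f_equal; ring. Qed.
Lemma concat_1 p q : pconcat p q 1 = q 1.
Proof. unfold pconcat, Defs.concat. destruct (Rle_dec 1 (1/2)); [lra|]. f_equal; ring. Qed.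
Lemma rev_0 p : rev_path p 0 = p 1.
Proof. unfold rev_path. f_equal; ring. Qed.
Lemma rev_1 p : rev_path p 1 = p 0.
Proof. unfold rev_path. f_equal; ring. Qed.

Lemma rev_rev p s : rev_path (rev_path p) s = p s.
Proof. unfold rev_path. f_equal; ring. Qed.

Lemma concat_pt p p' q q' : (forall s, I01 s -> p s = p' s) ->
  (forall s, I01 s -> q s = q' s) -> forall s, I01 s -> pconcat p q s = pconcat p' q' s.
Proof.
  intros Hp Hq s Hs. unfold pconcat, Defs.concat. unfold I01 in *.
  dec_elim; [apply Hp|apply Hq]; unfold I01; lra.
Qed.

Lemma rev_concat_eq p q : p 1 = q 0 -> forall s, I01 s ->
  rev_path (pconcat p q) s = pconcat (rev_path q) (rev_path p) s.
Proof.
  intros E s Hs. unfold rev_path, pconcat, Defs.concat. unfold I01 in Hs. dec_elim; try lra.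
  - replace (2*(1-s)) with 1 by lra. replace (1 - 2*s) with 0 by lra. auto.
  - f_equal; ring.
  - f_equal; ring.
Qed.

Lemma concat_forall (P : A -> Prop) p q : (forall u, I01 u -> P (p u)) ->
  (forall u, I01 u -> P (q u)) -> forall t, I01 t -> P (pconcat p q t).
Proof.
  intros Hp Hq t Ht. unfold pconcat, Defs.concat, I01 in *.
  destruct (Rle_dec t (1/2)); [apply Hp|apply Hq]; unfold I01; lra.
Qed.

Lemma rev_forall (P : A -> Prop) p : (forall u, I01 u -> P (p u)) ->
  forall t, I01 t -> P (rev_path p t).
Proof. intros Hp t Ht. apply Hp. unfold I01 in *; lra. Qed.
End PathOps.

#[local] Hint Rewrite concat_0 concat_1 rev_0 rev_1 : pth.

Section Homotopy.
Variable X : UniformSpace.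

Definition sq (s t : R) : Prop := I01 s /\ I01 t.

Definition cont2 (P : R -> R -> Prop) (H : R -> R -> X) : Prop :=
  forall s t, P s t -> forall E, ent X E ->
    exists d, 0 < d /\ forall s' t', P s' t' ->
      Rabs (s' - s) < d -> Rabs (t' - t) < d -> E (H s t) (H s' t').

Ltac rabs_tac := intros; unfold sq, I01 in *;
  repeat match goal with |- _ /\ _ => split end; rabs_elim; lra.

Lemma cont2_mono (P Q : R -> R -> Prop) H :
  (forall s t, P s t -> Q s t) -> cont2 Q H -> cont2 P H.
Proof.
  intros HPQ HQ s t Hp E HE. destruct (HQ s t (HPQ _ _ Hp) E HE) as [d [Hd Hd']].
  exists d; split; auto.
Qed.

Lemma cont2_swap P H : cont2 P H -> cont2 (fun s t => P t s) (fun s t => H t s).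
Proof.
  intros HH s t Hp E HE. destruct (HH t s Hp E HE) as [d [Hd Hd']].
  exists d; split; auto.
Qed.

Lemma cont2_comp P Q H g1 g2 K : cont2 Q H ->
  (forall s t, P s t -> Q (g1 s t) (g2 s t)) -> 0 < K ->
  (forall s t s' t', P s t -> P s' t' ->
     Rabs (g1 s' t' - g1 s t) <= K * (Rabs (s' - s) + Rabs (t' - t)) /\
     Rabs (g2 s' t' - g2 s t) <= K * (Rabs (s' - s) + Rabs (t' - t))) ->
  cont2 P (fun s t => H (g1 s t) (g2 s t)).
Proof.
  intros HH HPQ HK Hl s t Hp E HE.
  destruct (HH _ _ (HPQ s t Hp) E HE) as [d [Hd Hd']].
  exists (d / (2*K+1)). split; [apply Rdiv_lt_0_compat; lra|].
  intros s' t' Hp' H1 H2. destruct (Hl s t s' t' Hp Hp') as [L1 L2].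
  set (e := d / (2*K+1)) in *.
  assert (He : e * (2*K+1) = d) by (unfold e; field; lra).
  assert (Hsum : K * (Rabs (s'-s) + Rabs (t'-t)) < d).
  { assert (Rabs (s'-s) + Rabs (t'-t) < 2 * e) by lra. nra. }
  apply Hd'; [apply HPQ; auto | lra | lra].
Qed.

Lemma path_cont_cont2 a : path_cont X a -> cont2 sq (fun s _ => a s).
Proof.
  intros Ha s t [Hs Ht] E HE. destruct (Ha s Hs E HE) as [d [Hd H']].
  exists d; split; auto. intros s' t' [Hs' _] H1 _. apply H'; auto.
Qed.

Lemma cont2_path_cont H t0 : I01 t0 -> cont2 sq H -> path_cont X (fun s => H s t0).
Proof.
  intros Ht HH s Hs E HE. destruct (HH s t0 (conj Hs Ht) E HE) as [d [Hd H']].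
  exists d; split; auto. intros s' Hs' H1. apply H'; [split; auto | auto |].
  replace (t0 - t0) with 0 by ring; rewrite Rabs_R0; auto.
Qed.

Lemma path_cont_ext a b : (forall s, I01 s -> a s = b s) -> path_cont X a -> path_cont X b.
Proof.
  intros Heq Ha s Hs E HE. destruct (Ha s Hs E HE) as [d [Hd H']].
  exists d; split; auto. intros. rewrite <- !Heq; auto.
Qed.

Lemma hom_intro a b H : cont2 sq H ->
  (forall s, I01 s -> H s 0 = a s) -> (forall s, I01 s -> H s 1 = b s) ->
  (forall t, I01 t -> H 0 t = a 0 /\ H 1 t = a 1) -> homotopic_rel X a b.
Proof.
  intros HC H0 H1 He. exists H. split; [|auto]. intros s t Hs Ht E HE.
  destruct (HC s t (conj Hs Ht) E HE) as [d [Hd H']].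
  exists d; split; auto. intros; apply H'; auto; split; auto.
Qed.

Lemma hom_elim a b : homotopic_rel X a b -> exists H, cont2 sq H /\
  (forall s, I01 s -> H s 0 = a s) /\ (forall s, I01 s -> H s 1 = b s) /\
  (forall t, I01 t -> H 0 t = a 0 /\ H 1 t = a 1).
Proof.
  intros [H [HC HR]]. exists H; split; auto. intros s t [Hs Ht] E HE.
  destruct (HC s t Hs Ht E HE) as [d [Hd H']].
  exists d; split; auto. intros s' t' []; auto.
Qed.

Lemma hom_cont_l a b : homotopic_rel X a b -> path_cont X a.
Proof.
  intros Hh. destruct (hom_elim _ _ Hh) as [H [HC [H0 _]]].
  apply path_cont_ext with (fun s => H s 0); auto. apply cont2_path_cont; auto.
Qed.

Lemma hom_cont_r a b : homotopic_rel X a b -> path_cont X b.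
Proof.
  intros Hh. destruct (hom_elim _ _ Hh) as [H [HC [_ [H1 _]]]].
  apply path_cont_ext with (fun s => H s 1); auto. apply cont2_path_cont; auto.
Qed.

Lemma hom_ends a b : homotopic_rel X a b -> b 0 = a 0 /\ b 1 = a 1.
Proof.
  intros Hh. destruct (hom_elim _ _ Hh) as [H [HC [H0 [H1 He]]]].
  rewrite <- (H1 0), <- (H1 1) by auto. split; apply (He 1); auto.
Qed.

Lemma hom_refl a : path_cont X a -> homotopic_rel X a a.
Proof. intros Ha. apply hom_intro with (fun s _ => a s); auto. apply path_cont_cont2; auto. Qed.

Lemma hom_ext a b a' b' : (forall s, I01 s -> a s = a' s) ->
  (forall s, I01 s -> b s = b' s) -> homotopic_rel X a b -> homotopic_rel X a' b'.
Proof.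
  intros Ea Eb Hh. destruct (hom_elim _ _ Hh) as [H [HC [H0 [H1 He]]]].
  apply hom_intro with H; auto.
  - intros; rewrite <- Ea; auto.
  - intros; rewrite <- Eb; auto.
  - intros; rewrite <- !Ea; auto.
Qed.

Lemma hom_sym a b : homotopic_rel X a b -> homotopic_rel X b a.
Proof.
  intros Hh. destruct (hom_ends _ _ Hh) as [E0 E1].
  destruct (hom_elim _ _ Hh) as [H [HC [H0 [H1 He]]]].
  apply hom_intro with (fun s t => H s (1 - t)).
  - apply (cont2_comp sq sq H (fun s t => s) (fun s t => 1 - t) 1); auto; [|lra|rabs_tac].
    intros s t [Hs Ht]; split; auto; unfold I01 in *; lra.
  - intros; replace (1-0) with 1 by ring; auto.
  - intros; replace (1-1) with 0 by ring; auto.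
  - intros t Ht. rewrite E0, E1. apply He. unfold I01 in *; lra.
Qed.

Definition half1 s t := 0 <= s <= 1/2 /\ I01 t.
Definition half2 s t := 1/2 <= s <= 1 /\ I01 t.

Lemma cont2_glue A B : cont2 half1 A -> cont2 half2 B ->
  (forall t, I01 t -> A (1/2) t = B (1/2) t) ->
  cont2 sq (fun s t => if Rle_dec s (1/2) then A s t else B s t).
Proof.
  intros HA HB Hs s t [Is It] E HE. unfold I01 in Is.
  destruct (Rlt_le_dec s (1/2)) as [Hlt|Hge].
  - destruct (HA s t (conj (conj (proj1 Is) (Rlt_le _ _ Hlt)) It) E HE) as [d [Hd H']].
    exists (Rmin d (1/2 - s)). split; [apply Rmin_pos; lra|].
    intros s' t' [Is' It'] H1 H2.
    pose proof (Rmin_l d (1/2 - s)); pose proof (Rmin_r d (1/2-s)).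
    apply Rabs_def2 in H1. unfold I01 in Is'.
    destruct (Rle_dec s (1/2)); [|lra]. destruct (Rle_dec s' (1/2)); [|lra].
    apply H'; [split; [lra|auto] | apply Rabs_def1; lra | eapply Rlt_le_trans; [exact H2|lra]].
  - destruct (Rle_lt_or_eq_dec _ _ Hge) as [Hgt|Heq].
    + destruct (HB s t (conj (conj (Rlt_le _ _ Hgt) (proj2 Is)) It) E HE) as [d [Hd H']].
      exists (Rmin d (s - 1/2)). split; [apply Rmin_pos; lra|].
      intros s' t' [Is' It'] H1 H2.
      pose proof (Rmin_l d (s - 1/2)); pose proof (Rmin_r d (s - 1/2)).
      apply Rabs_def2 in H1. unfold I01 in Is'.
      destruct (Rle_dec s (1/2)); [lra|]. destruct (Rle_dec s' (1/2)); [lra|].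
      apply H'; [split; [lra|auto] | apply Rabs_def1; lra | eapply Rlt_le_trans; [exact H2|lra]].
    + subst s.
      assert (Q1 : half1 (1/2) t) by (split; auto; lra).
      assert (Q2 : half2 (1/2) t) by (split; auto; lra).
      destruct (HA (1/2) t Q1 E HE) as [d1 [Hd1 H1']].
      destruct (HB (1/2) t Q2 E HE) as [d2 [Hd2 H2']].
      exists (Rmin d1 d2). split; [apply Rmin_pos; lra|].
      intros s' t' [Is' It'] H1 H2.
      pose proof (Rmin_l d1 d2); pose proof (Rmin_r d1 d2).
      apply Rabs_def2 in H1. apply Rabs_def2 in H2. unfold I01 in Is'.
      destruct (Rle_dec (1/2) (1/2)); [|lra]. destruct (Rle_dec s' (1/2)).
      * apply H1'; [split; [lra|auto] | |]; apply Rabs_def1; lra.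
      * rewrite Hs; auto. apply H2'; [split; [lra|auto] | |]; apply Rabs_def1; lra.
Qed.

Lemma cont2_glue_t A B :
  cont2 (fun s t => I01 s /\ 0 <= t <= 1/2) A ->
  cont2 (fun s t => I01 s /\ 1/2 <= t <= 1) B ->
  (forall s, I01 s -> A s (1/2) = B s (1/2)) ->
  cont2 sq (fun s t => if Rle_dec t (1/2) then A s t else B s t).
Proof.
  intros HA HB Hs.
  assert (G : cont2 sq (fun u v => if Rle_dec u (1/2) then A v u else B v u)).
  { apply cont2_glue; auto.
    - eapply cont2_mono; [|apply (cont2_swap _ _ HA)]. intros u v [? ?]; split; auto.
    - eapply cont2_mono; [|apply (cont2_swap _ _ HB)]. intros u v [? ?]; split; auto. }
  eapply cont2_mono; [|apply (cont2_swap _ _ G)]. intros s t [? ?]; split; auto.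
Qed.

(* Transitivity: run the two homotopies one after the other in time. *)
Lemma hom_trans a b c :
  homotopic_rel X a b -> homotopic_rel X b c -> homotopic_rel X a c.
Proof.
  intros Hab Hbc. destruct (hom_ends _ _ Hab) as [E0 E1].
  destruct (hom_elim _ _ Hab) as [H1 [HC1 [H10 [H11 He1]]]].
  destruct (hom_elim _ _ Hbc) as [H2 [HC2 [H20 [H21 He2]]]].
  apply hom_intro with
    (fun s t => if Rle_dec t (1/2) then H1 s (2*t) else H2 s (2*t-1)).
  - apply cont2_glue_t.
    + apply (cont2_comp _ sq H1 (fun s t => s) (fun s t => 2*t) 2); auto; [|lra|rabs_tac].
      intros s t [? ?]; split; auto; unfold I01; lra.
    + apply (cont2_comp _ sq H2 (fun s t => s) (fun s t => 2*t-1) 2); auto; [|lra|rabs_tac].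
      intros s t [? ?]; split; auto; unfold I01; lra.
    + intros s Hs. replace (2*(1/2)) with 1 by field. replace (1-1) with 0 by ring.
      rewrite H11, H20; auto.
  - intros s Hs. destruct (Rle_dec 0 (1/2)); [|lra]. replace (2*0) with 0 by ring; auto.
  - intros s Hs. destruct (Rle_dec 1 (1/2)); [lra|]. replace (2*1-1) with 1 by ring; auto.
  - intros t Ht. destruct (Rle_dec t (1/2)).
    + apply He1; unfold I01 in *; lra.
    + rewrite <- E0, <- E1. apply He2; unfold I01 in *; lra.
Qed.

Definition lip (K : R) (f : R -> R) : Prop :=
  forall s s', I01 s -> I01 s' -> Rabs (f s' - f s) <= K * Rabs (s' - s).

Lemma affine_combination_bound A B C u v : 0 <= u <= 1 -> Rabs C <= 1 ->
  Rabs (A*(1-u) + u*B + v*C) <= Rabs A + Rabs B + Rabs v.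
Proof.
  intros Hu HC.
  eapply Rle_trans; [apply Rabs_triang|].
  eapply Rle_trans; [apply Rplus_le_compat_r, Rabs_triang|].
  rewrite !Rabs_mult, (Rabs_pos_eq (1-u)), (Rabs_pos_eq u) by lra.
  pose proof (Rabs_pos A); pose proof (Rabs_pos B); pose proof (Rabs_pos v). nra.
Qed.

(* Straight-line homotopy: two Lipschitz reparametrisations of a path with the
   same end-points are homotopic. *)
Lemma hom_line a f0 f1 K : path_cont X a -> 0 < K -> lip K f0 -> lip K f1 ->
  (forall s, I01 s -> I01 (f0 s)) -> (forall s, I01 s -> I01 (f1 s)) ->
  f0 0 = f1 0 -> f0 1 = f1 1 ->
  homotopic_rel X (fun s => a (f0 s)) (fun s => a (f1 s)).
Proof.
  intros Ha HK L0 L1 I0 I1 E0 E1.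
  apply hom_intro with (fun s t => a (f0 s + t * (f1 s - f0 s))).
  - apply (cont2_comp sq sq (fun u _ => a u) (fun s t => f0 s + t * (f1 s - f0 s))
      (fun _ _ => 0) (2*K+1)); [apply path_cont_cont2; auto | | lra |].
    + intros s t [Hs Ht]. split; auto.
      pose proof (I0 s Hs); pose proof (I1 s Hs). unfold I01 in *. nra.
    + intros s t s' t' [Hs Ht] [Hs' Ht'].
      pose proof (Rabs_pos (s'-s)); pose proof (Rabs_pos (t'-t)). split.
      * replace (f0 s' + t' * (f1 s' - f0 s') - (f0 s + t * (f1 s - f0 s))) with
          ((f0 s' - f0 s)*(1-t') + t' * (f1 s' - f1 s) + (t'-t) * (f1 s - f0 s)) by ring.
        eapply Rle_trans; [apply affine_combination_bound|].
        { unfold I01 in *; lra. }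
        { pose proof (I0 s Hs); pose proof (I1 s Hs). unfold I01 in *. rabs_elim; lra. }
        pose proof (L0 s s' Hs Hs'); pose proof (L1 s s' Hs Hs'). nra.
      * replace (0-0) with 0 by ring. rewrite Rabs_R0. nra.
  - intros s Hs. simpl. f_equal. ring.
  - intros s Hs. simpl. f_equal. ring.
  - intros t Ht. rewrite E0, E1. split; f_equal; ring.
Qed.

Lemma hom_reparam a f K : path_cont X a -> 1 <= K -> lip K f ->
  (forall s, I01 s -> I01 (f s)) -> f 0 = 0 -> f 1 = 1 ->
  homotopic_rel X (fun s => a (f s)) a.
Proof.
  intros. apply hom_ext with (fun s => a (f s)) (fun s => a ((fun u => u) s)); auto.
  apply hom_line with K; auto; try lra.
  intros s s' _ _. pose proof (Rabs_pos (s'-s)). nra.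
Qed.

Lemma hom_concat a a' b b' : a 1 = b 0 -> homotopic_rel X a a' ->
  homotopic_rel X b b' -> homotopic_rel X (pconcat a b) (pconcat a' b').
Proof.
  intros Hab Ha Hb.
  destruct (hom_elim _ _ Ha) as [H1 [HC1 [H10 [H11 He1]]]].
  destruct (hom_elim _ _ Hb) as [H2 [HC2 [H20 [H21 He2]]]].
  apply hom_intro with
    (fun s t => if Rle_dec s (1/2) then H1 (2*s) t else H2 (2*s-1) t).
  - apply cont2_glue.
    + apply (cont2_comp _ sq H1 (fun s t => 2*s) (fun s t => t) 2); auto; [|lra|rabs_tac].
      intros s t [? ?]; split; auto; unfold I01; lra.
    + apply (cont2_comp _ sq H2 (fun s t => 2*s-1) (fun s t => t) 2); auto; [|lra|rabs_tac].
      intros s t [? ?]; split; auto; unfold I01; lra.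
    + intros t Ht. replace (2*(1/2)) with 1 by field. replace (1-1) with 0 by ring.
      rewrite (proj2 (He1 t Ht)), (proj1 (He2 t Ht)). auto.
  - intros s Hs. unfold pconcat, Defs.concat.
    destruct (Rle_dec s (1/2)); [apply H10|apply H20]; unfold I01 in *; lra.
  - intros s Hs. unfold pconcat, Defs.concat.
    destruct (Rle_dec s (1/2)); [apply H11|apply H21]; unfold I01 in *; lra.
  - intros t Ht. unfold pconcat, Defs.concat.
    destruct (Rle_dec 0 (1/2)); [|lra]. destruct (Rle_dec 1 (1/2)); [lra|].
    replace (2*0) with 0 by ring. replace (2*1-1) with 1 by ring.
    split; [apply He1|apply He2]; auto.
Qed.

Lemma hom_rev a a' : homotopic_rel X a a' -> homotopic_rel X (rev_path a) (rev_path a').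
Proof.
  intros Ha. destruct (hom_elim _ _ Ha) as [H1 [HC1 [H10 [H11 He1]]]].
  apply hom_intro with (fun s t => H1 (1-s) t).
  - apply (cont2_comp _ sq H1 (fun s t => 1-s) (fun s t => t) 1); auto; [|lra|rabs_tac].
    intros s t [? ?]; split; auto; unfold I01 in *; lra.
  - intros s Hs. unfold rev_path. apply H10; unfold I01 in *; lra.
  - intros s Hs. unfold rev_path. apply H11; unfold I01 in *; lra.
  - intros t Ht. unfold rev_path. replace (1-0) with 1 by ring. replace (1-1) with 0 by ring.
    split; apply He1; auto.
Qed.

Lemma cont_const (x : X) : path_cont X (fun _ => x).
Proof. intros t Ht E HE. exists 1. split; [lra|]. intros. apply ent_refl; auto. Qed.

Lemma cont_concat a b : path_cont X a -> path_cont X b -> a 1 = b 0 ->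
  path_cont X (pconcat a b).
Proof. intros. eapply hom_cont_l. apply hom_concat; auto; apply hom_refl; auto. Qed.

Lemma cont_rev a : path_cont X a -> path_cont X (rev_path a).
Proof. intros. eapply hom_cont_l. apply hom_rev; apply hom_refl; auto. Qed.

Ltac lip_tac := unfold lip; intros; unfold I01 in *; dec_elim; rabs_elim; lra.
Ltac I01_tac := intros; unfold I01 in *; dec_elim; lra.

Definition phi_assoc (s : R) : R :=
  if Rle_dec s (1/4) then 2*s else if Rle_dec s (1/2) then s + 1/4 else s/2 + 1/2.

Lemma hom_assoc a b c : path_cont X a -> path_cont X b -> path_cont X c ->
  a 1 = b 0 -> b 1 = c 0 ->
  homotopic_rel X (pconcat (pconcat a b) c) (pconcat a (pconcat b c)).
Proof.
  intros Ha Hb Hc E1 E2.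
  set (R0 := pconcat a (pconcat b c)).
  assert (HR : path_cont X R0).
  { apply cont_concat; auto. apply cont_concat; auto.
    unfold pconcat, Defs.concat. destruct (Rle_dec 0 (1/2)); [|lra].
    rewrite E1. f_equal; ring. }
  apply hom_ext with (fun s => R0 (phi_assoc s)) R0; auto.
  - intros s Hs. unfold R0, phi_assoc, pconcat, Defs.concat. unfold I01 in Hs.
    dec_elim; try lra; f_equal; lra.
  - apply hom_reparam with 2; auto; try lra; unfold phi_assoc; [lip_tac|I01_tac| |];
      dec_elim; lra.
Qed.

Lemma hom_unit_l a : path_cont X a -> homotopic_rel X (pconcat (fun _ => a 0) a) a.
Proof.
  intros Ha.
  apply hom_ext with (fun s => a ((fun s => if Rle_dec s (1/2) then 0 else 2*s-1) s)) a; auto.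
  - intros s Hs. unfold pconcat, Defs.concat. dec_elim; auto.
  - apply hom_reparam with 2; auto; try lra; [lip_tac|I01_tac|dec_elim; lra|dec_elim; lra].
Qed.

Lemma hom_unit_r a : path_cont X a -> homotopic_rel X (pconcat a (fun _ => a 1)) a.
Proof.
  intros Ha.
  apply hom_ext with (fun s => a ((fun s => if Rle_dec s (1/2) then 2*s else 1) s)) a; auto.
  - intros s Hs. unfold pconcat, Defs.concat. dec_elim; auto.
  - apply hom_reparam with 2; auto; try lra; [lip_tac|I01_tac|dec_elim; lra|dec_elim; lra].
Qed.

Lemma hom_cancel_l a : path_cont X a ->
  homotopic_rel X (pconcat (rev_path a) a) (fun _ => a 1).
Proof.
  intros Ha.
  apply hom_ext with (fun s => a ((fun s => if Rle_dec s (1/2) then 1-2*s else 2*s-1) s))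
                     (fun s => a ((fun _ => 1) s)); auto.
  - intros s Hs. unfold pconcat, Defs.concat, rev_path. dec_elim; auto.
  - apply hom_line with 2; auto; try lra; try lip_tac; try I01_tac; dec_elim; lra.
Qed.

Lemma hom_cancel_r a : path_cont X a ->
  homotopic_rel X (pconcat a (rev_path a)) (fun _ => a 0).
Proof.
  intros Ha.
  apply hom_ext with (fun s => a ((fun s => if Rle_dec s (1/2) then 2*s else 2-2*s) s))
                     (fun s => a ((fun _ => 0) s)); auto.
  - intros s Hs. unfold pconcat, Defs.concat, rev_path. dec_elim; auto. f_equal; ring.
  - apply hom_line with 2; auto; try lra; try lip_tac; try I01_tac; dec_elim; lra.
Qed.

#[local] Hint Resolve cont_concat cont_rev cont_const : core.

(* Consequences of the groupoid laws used for the "difference" ā·b of two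
   paths a, b with a common origin, which is what the entourages E^* see. *)
Lemma hom_cancel_prefix a b : path_cont X a -> path_cont X b -> a 1 = b 0 ->
  homotopic_rel X (pconcat (rev_path a) (pconcat a b)) b.
Proof.
  intros Ha Hb E.
  eapply hom_trans. { apply hom_sym, hom_assoc; auto; autorewrite with pth; auto. }
  eapply hom_trans.
  { apply hom_concat; [autorewrite with pth; auto | apply hom_cancel_l; auto | apply hom_refl; auto]. }
  rewrite E. apply hom_unit_l; auto.
Qed.

Lemma hom_cancel_rev_prefix a b : path_cont X a -> path_cont X b -> a 0 = b 0 ->
  homotopic_rel X (pconcat a (pconcat (rev_path a) b)) b.
Proof.
  intros Ha Hb E.
  eapply hom_trans. { apply hom_sym, hom_assoc; auto; autorewrite with pth; auto. }
  eapply hom_trans.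
  { apply hom_concat; [autorewrite with pth; auto | apply hom_cancel_r; auto | apply hom_refl; auto]. }
  rewrite E. apply hom_unit_l; auto.
Qed.

Lemma hom_difference_factor a b g : path_cont X a -> path_cont X b -> a 0 = b 0 ->
  homotopic_rel X (pconcat (rev_path a) b) g -> homotopic_rel X b (pconcat a g).
Proof.
  intros Ha Hb E Hg. pose proof (hom_ends _ _ Hg) as [G0 G1]. autorewrite with pth in G0.
  apply hom_sym. eapply hom_trans; [|apply (hom_cancel_rev_prefix a b); auto].
  apply hom_concat; [autorewrite with pth; auto | apply hom_refl; auto | apply hom_sym; auto].
Qed.

Lemma hom_of_trivial_difference a b : path_cont X a -> path_cont X b -> a 0 = b 0 ->
  homotopic_rel X (pconcat (rev_path a) b) (fun _ => a 1) -> homotopic_rel X a b.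
Proof.
  intros Ha Hb E Hg. apply hom_sym.
  eapply hom_trans; [apply (hom_difference_factor a b); eauto|]. apply hom_unit_r; auto.
Qed.

Lemma hom_difference_sym a b g : path_cont X a -> path_cont X b -> a 0 = b 0 ->
  homotopic_rel X (pconcat (rev_path a) b) g ->
  homotopic_rel X (pconcat (rev_path b) a) (rev_path g).
Proof.
  intros Ha Hb E Hg. pose proof (hom_rev _ _ Hg) as Hr.
  eapply hom_ext; [| |exact Hr]; auto.
  intros s Hs. rewrite rev_concat_eq; auto; [|autorewrite with pth; auto].
  apply concat_pt; auto. intros; apply rev_rev.
Qed.

Lemma hom_difference_trans a1 a2 a3 g12 g13 :
  path_cont X a1 -> path_cont X a2 -> path_cont X a3 -> a1 0 = a2 0 -> a1 0 = a3 0 ->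
  homotopic_rel X (pconcat (rev_path a1) a2) g12 ->
  homotopic_rel X (pconcat (rev_path a1) a3) g13 ->
  homotopic_rel X (pconcat (rev_path a2) a3) (pconcat (rev_path g12) g13).
Proof.
  intros H1 H2 H3 E2 E3 G12 G13.
  pose proof (hom_ends _ _ G12) as [F0 F1]. pose proof (hom_ends _ _ G13) as [K0 K1].
  autorewrite with pth in F0, F1, K0, K1.
  pose proof (hom_cont_r _ _ G12) as C12. pose proof (hom_cont_r _ _ G13) as C13.
  pose proof (hom_difference_factor _ _ _ H1 H2 E2 G12) as A2.
  pose proof (hom_difference_factor _ _ _ H1 H3 E3 G13) as A3.
  assert (P1 : path_cont X (pconcat (rev_path g12) (rev_path a1)))
    by (apply cont_concat; auto; autorewrite with pth; congruence).
  assert (P2 : path_cont X (pconcat a1 g13)) by (apply cont_concat; auto; congruence).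
  eapply hom_trans.
  { apply hom_concat; [autorewrite with pth; congruence | apply hom_rev, A2 | apply A3]. }
  eapply hom_trans.
  { apply (hom_ext (pconcat (pconcat (rev_path g12) (rev_path a1)) (pconcat a1 g13))
           (pconcat (pconcat (rev_path g12) (rev_path a1)) (pconcat a1 g13))).
    - apply concat_pt; auto. intros; symmetry; apply rev_concat_eq; congruence.
    - reflexivity.
    - apply hom_refl. apply cont_concat; auto. autorewrite with pth; auto. }
  eapply hom_trans. { apply hom_assoc; auto; autorewrite with pth; congruence. }
  apply hom_concat; [autorewrite with pth; congruence | apply hom_refl; auto |].
  apply hom_cancel_prefix; auto; congruence.
Qed.

Lemma hom_of_nullhomotopic_loop p q : path_cont X p -> path_cont X q ->
  p 0 = q 0 -> p 1 = q 1 ->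
  homotopic_rel X (pconcat p (rev_path q)) (fun _ => p 0) -> homotopic_rel X p q.
Proof.
  intros Hp Hq E0 E1 Hh.
  assert (A : homotopic_rel X (rev_path p) (rev_path q)).
  { apply hom_of_trivial_difference; auto; [autorewrite with pth; auto|].
    eapply hom_ext; [| |exact Hh].
    - apply concat_pt; auto. intros; symmetry; apply rev_rev.
    - intros; autorewrite with pth; auto. }
  pose proof (hom_rev _ _ A) as B. eapply hom_ext; [| |exact B]; intros; apply rev_rev.
Qed.
End Homotopy.

#[local] Hint Resolve cont_concat cont_rev cont_const : core.

Section UniversalCover.
Variables (X : UniformSpace) (x0 : X).
Implicit Types (C D : Xtilde X x0) (a b g : R -> X).

Definition cls a : (R -> X) -> Prop :=
  fun b => path_cont X b /\ b 0 = x0 /\ homotopic_rel X a b.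

Lemma cls_is_class a : path_cont X a -> a 0 = x0 -> is_class X x0 (cls a).
Proof. intros. exists a. split; auto. split; auto. intros b. unfold cls. tauto. Qed.

Definition class_of a (H1 : path_cont X a) (H2 : a 0 = x0) : Xtilde X x0 :=
  exist _ (cls a) (cls_is_class a H1 H2).

Lemma class_of_mem a H1 H2 : proj1_sig (class_of a H1 H2) a.
Proof. simpl. repeat split; auto. apply hom_refl; auto. Qed.

Lemma mem_char C b : proj1_sig C b -> path_cont X b /\ b 0 = x0.
Proof. destruct C as [C [a [Ha [Ha0 HC]]]]; simpl; intros Hb; apply HC in Hb; tauto. Qed.

Lemma mem_hom C a b : proj1_sig C a -> proj1_sig C b -> homotopic_rel X a b.
Proof.
  destruct C as [C [c [Hc [Hc0 HC]]]]; simpl; intros Ha Hb. apply HC in Ha. apply HC in Hb.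
  apply hom_trans with c; [apply hom_sym|]; tauto.
Qed.

Lemma mem_closed C a b : proj1_sig C a -> homotopic_rel X a b -> proj1_sig C b.
Proof.
  destruct C as [C [c [Hc [Hc0 HC]]]]; simpl; intros Ha Hab. apply HC in Ha.
  destruct Ha as [Ha1 [Ha2 Ha3]]. apply HC. destruct (hom_ends _ _ _ Hab).
  split; [eapply hom_cont_r; eauto|]. split; [congruence|]. apply hom_trans with a; auto.
Qed.

Lemma rep_mem C : proj1_sig C (rep X x0 C).
Proof.
  unfold rep. apply epsilon_spec. destruct C as [C [c [Hc [Hc0 HC]]]]; simpl.
  exists c. apply HC. repeat split; auto. apply hom_refl; auto.
Qed.

Lemma mem_end C a : proj1_sig C a -> a 1 = piX X x0 C.
Proof.
  intros Ha. unfold piX. pose proof (mem_hom C _ _ Ha (rep_mem C)) as Hh.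
  destruct (hom_ends _ _ _ Hh); auto.
Qed.

Lemma Xtilde_eq C D a b : proj1_sig C a -> proj1_sig D b -> homotopic_rel X a b -> C = D.
Proof.
  intros Ha Hb Hab.
  assert (E : proj1_sig C = proj1_sig D).
  { apply functional_extensionality. intros c. apply propositional_extensionality.
    split; intros Hc.
    - apply (mem_closed D b); auto. eapply hom_trans; [apply hom_sym, Hab|].
      apply (mem_hom C); auto.
    - apply (mem_closed C a); auto. eapply hom_trans; [apply Hab|]. apply (mem_hom D); auto. }
  destruct C as [C pC], D as [D pD]. simpl in E. subst. f_equal. apply proof_irrelevance.
Qed.

Lemma Estar_get E C D a b : Estar X x0 E C D -> proj1_sig C a -> proj1_sig D b ->
  exists z g, path_cont X g /\ (forall t, I01 t -> E z (g t)) /\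
    homotopic_rel X (pconcat (rev_path a) b) g.
Proof.
  intros [a' [b' [Ha' [Hb' [z [g [Hg [Hz Hh]]]]]]]] Ha Hb. exists z, g. split; auto. split; auto.
  eapply hom_trans; [|exact Hh]. apply hom_concat.
  - rewrite rev_1. destruct (mem_char C a); destruct (mem_char D b); congruence.
  - apply hom_rev. apply (mem_hom C); auto.
  - apply (mem_hom D); auto.
Qed.

Lemma Estar_intro E C D a b z g : proj1_sig C a -> proj1_sig D b ->
  path_cont X g -> (forall t, I01 t -> E z (g t)) ->
  homotopic_rel X (pconcat (rev_path a) b) g -> Estar X x0 E C D.
Proof. intros. exists a, b. repeat split; auto. exists z, g. auto. Qed.

Lemma Estar_difference E C D : Estar X x0 E C D ->
  exists z g, path_from X (piX X x0 C) (piX X x0 D) g /\ (forall t, I01 t -> E z (g t)) /\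
    homotopic_rel X (pconcat (rev_path (rep X x0 C)) (rep X x0 D)) g.
Proof.
  intros HCD. destruct (Estar_get E C D _ _ HCD (rep_mem C) (rep_mem D)) as [z [g [Hg [Hz Hh]]]].
  destruct (hom_ends _ _ _ Hh) as [G0 G1]. autorewrite with pth in G0, G1.
  exists z, g. split; [split; [exact Hg|split]|split; assumption].
  - rewrite G0. apply mem_end, rep_mem.
  - rewrite G1. apply mem_end, rep_mem.
Qed.

Lemma Estar_mono (E E' : X -> X -> Prop) C D : (forall x y, E x y -> E' x y) ->
  Estar X x0 E C D -> Estar X x0 E' C D.
Proof.
  intros HE [a [b [Ha [Hb [z [g [Hg [Hz Hh]]]]]]]].
  exists a, b. repeat split; auto. exists z, g. unfold ball in *. auto.
Qed.

Lemma Estar_refl E C : ent X E -> Estar X x0 E C C.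
Proof.
  intros HE. pose proof (rep_mem C) as Hr. destruct (mem_char C _ Hr) as [Hc H0].
  apply Estar_intro with (rep X x0 C) (rep X x0 C) (rep X x0 C 1) (fun _ => rep X x0 C 1); auto.
  - intros; apply ent_refl; auto.
  - apply hom_cancel_l; auto.
Qed.

Lemma Estar_sym E C D : Estar X x0 E C D -> Estar X x0 E D C.
Proof.
  intros [a [b [Ha [Hb [z [g [Hg [Hz Hh]]]]]]]].
  destruct (mem_char C _ Ha); destruct (mem_char D _ Hb).
  apply Estar_intro with b a z (rev_path g); auto.
  - apply rev_forall with (P := E z); auto.
  - apply hom_difference_sym; auto; congruence.
Qed.

Lemma Estar_extend E C g z : path_from X (piX X x0 C) (g 1) g ->
  (forall t, I01 t -> E z (g t)) ->
  exists D, Estar X x0 E C D /\ piX X x0 D = g 1 /\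
    proj1_sig D (pconcat (rep X x0 C) g).
Proof.
  intros [Hg [G0 _]] Hz.
  pose proof (rep_mem C) as Rc. destruct (mem_char C _ Rc) as [Cc C0].
  pose proof (mem_end C _ Rc) as Ec.
  assert (Cag : path_cont X (pconcat (rep X x0 C) g)) by (apply cont_concat; auto; congruence).
  assert (Sag : pconcat (rep X x0 C) g 0 = x0) by (rewrite concat_0; auto).
  exists (class_of _ Cag Sag). split; [|split].
  - apply Estar_intro with (rep X x0 C) (pconcat (rep X x0 C) g) z g; auto; try apply class_of_mem.
    apply hom_cancel_prefix; auto; congruence.
  - rewrite <- (mem_end _ _ (class_of_mem _ Cag Sag)). apply concat_1.
  - apply class_of_mem.
Qed.

Lemma piX_surjective : path_connected X -> forall y, exists C, piX X x0 C = y.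
Proof.
  intros PC y. destruct (PC x0 y) as [a [Ha [H0 H1]]]. exists (class_of a Ha H0).
  rewrite <- (mem_end _ _ (class_of_mem a Ha H0)). auto.
Qed.

Definition simply_connected_at_scale (F : X -> X -> Prop) : Prop :=
  forall (x : X) (a : R -> X), path_from X x x a ->
    (forall t, I01 t -> ball x F (a t)) -> homotopic_rel X a (fun _ => x).

Definition small (F E0 : X -> X -> Prop) : Prop :=
  ent X E0 /\ (forall x y, E0 x y -> E0 y x) /\
  (forall x y z u v, E0 x y -> E0 y z -> E0 z u -> E0 u v -> F x v).

Lemma small_two_balls F E0 z z' x y w : small F E0 ->
  E0 z x -> E0 z y -> E0 z' y -> E0 z' w -> F x w.
Proof. intros [_ [Hsym H4]] ? ? ? ?. apply H4 with z y z'; auto. Qed.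

Section SmallEntourage.
Variables F E0 : X -> X -> Prop.
Hypotheses (HS : simply_connected_at_scale F) (Hsmall : small F E0).

Lemma small_ball_path z g x : (forall t, I01 t -> E0 z (g t)) -> (exists u, I01 u /\ g u = x) ->
  forall t, I01 t -> F x (g t).
Proof.
  intros Hz [u [Hu <-]] t Ht. destruct Hsmall as [HE _].
  apply (small_two_balls F E0 z z (g u) (g t) (g t)); auto; apply ent_refl; auto.
Qed.

Lemma Estar_pi_injective C D : Estar X x0 E0 C D -> piX X x0 C = piX X x0 D -> C = D.
Proof.
  intros HCD Hp.
  destruct (Estar_difference E0 C D HCD) as [z [g [[Hg [G0 G1]] [Hz Hh]]]].
  pose proof (rep_mem C) as Ra. pose proof (rep_mem D) as Rb.
  destruct (mem_char C _ Ra) as [Ca A0]. destruct (mem_char D _ Rb) as [Cb B0].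
  assert (Hl : homotopic_rel X g (fun _ => piX X x0 C)).
  { apply HS; [split; auto; split; congruence|].
    apply (small_ball_path z); eauto. }
  apply (Xtilde_eq C D _ _ Ra Rb). apply hom_of_trivial_difference; auto; [congruence|].
  rewrite (mem_end C _ Ra). eapply hom_trans; eauto.
Qed.

Lemma Estar_triangle C1 C2 C3 : Estar X x0 E0 C1 C2 -> Estar X x0 E0 C1 C3 ->
  rel_image (piX X x0) (Estar X x0 E0) (piX X x0 C2) (piX X x0 C3) ->
  Estar X x0 E0 C2 C3.
Proof.
  intros H12 H13 [D2 [D3 [H23 [P2 P3]]]].
  destruct (Estar_difference E0 _ _ H12) as [z12 [g12 [[Hg12 [G120 G121]] [Hz12 Hh12]]]].
  destruct (Estar_difference E0 _ _ H13) as [z13 [g13 [[Hg13 [G130 G131]] [Hz13 Hh13]]]].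
  destruct (Estar_difference E0 _ _ H23) as [z23 [g23 [[Hg23 [G230 G231]] [Hz23 Hh23]]]].
  rewrite P2 in G230. rewrite P3 in G231.
  destruct (mem_char _ _ (rep_mem C1)). destruct (mem_char _ _ (rep_mem C2)).
  destruct (mem_char _ _ (rep_mem C3)).
  set (p := pconcat (rev_path g12) g13).
  assert (Cp : path_cont X p) by (apply cont_concat; auto; autorewrite with pth; congruence).
  assert (Hp : homotopic_rel X (pconcat (rev_path (rep X x0 C2)) (rep X x0 C3)) p).
  { apply hom_difference_trans with (rep X x0 C1); auto; congruence. }
  (* the loop p·ḡ23 based at pi(C2) lies in the F-ball of pi(C2) *)
  assert (Hloop : forall t, I01 t -> F (piX X x0 C2) (pconcat p (rev_path g23) t)).
  { assert (B13 : forall u, I01 u -> F (piX X x0 C2) (g13 u)).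
    { intros u Hu. rewrite <- G121.
      apply (small_two_balls F E0 z12 z13 _ (g12 0)); auto. rewrite G120, <- G130; auto. }
    apply concat_forall; [apply concat_forall; [apply rev_forall|exact B13]|apply rev_forall].
    - apply (small_ball_path z12); eauto.
    - apply (small_ball_path z23); eauto. }
  assert (Hpq : homotopic_rel X p g23).
  { apply hom_of_nullhomotopic_loop; auto; unfold p; autorewrite with pth; try congruence.
    replace (g12 1) with (piX X x0 C2) by congruence. apply HS; [|exact Hloop].
    split; [apply cont_concat; auto; unfold p; autorewrite with pth; congruence|].
    unfold p. autorewrite with pth. split; congruence. }
  apply Estar_intro with (rep X x0 C2) (rep X x0 C3) z23 g23; auto using rep_mem.
  eapply hom_trans; eauto.
Qed.
End SmallEntourage.
End UniversalCover.

Definition emd {A : Type} (x y : A) : {x = y} + {x <> y} :=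
  excluded_middle_informative (x = y).

Lemma sumR_app (l1 l2 : list R) : sumR (l1 ++ l2) = sumR l1 + sumR l2.
Proof. induction l1; simpl; [ring|rewrite IHl1; ring]. Qed.

Lemma sumR_zero {A} (h : A -> R) l : (forall x, In x l -> h x = 0) -> sumR (map h l) = 0.
Proof. induction l; simpl; intros H; auto. rewrite H, IHl; auto. ring. Qed.

Lemma sumR_ext {A} (h h' : A -> R) l :
  (forall x, In x l -> h x = h' x) -> sumR (map h l) = sumR (map h' l).
Proof. intros; f_equal; apply map_ext_in; auto. Qed.

Lemma sumR_plus {A} (g h : A -> R) l :
  sumR (map (fun y => g y + h y) l) = sumR (map g l) + sumR (map h l).
Proof. induction l; simpl; [ring|rewrite IHl; ring]. Qed.

Lemma sumR_minus {A} (g h : A -> R) l :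
  sumR (map (fun y => g y - h y) l) = sumR (map g l) - sumR (map h l).
Proof. induction l; simpl; [ring|rewrite IHl; ring]. Qed.

Lemma sumR_nonneg {A} (h : A -> R) l : (forall x, In x l -> 0 <= h x) -> 0 <= sumR (map h l).
Proof.
  induction l; simpl; intros H; [lra|].
  pose proof (H a (or_introl eq_refl)). assert (0 <= sumR (map h l)) by auto. lra.
Qed.

Lemma sumR_nz {A} (h : A -> R) l : sumR (map h l) <> 0 -> exists x, In x l /\ h x <> 0.
Proof.
  intros H. destruct (classic (exists x, In x l /\ h x <> 0)) as [|N]; auto.
  exfalso. apply H. apply sumR_zero. intros x Hx.
  destruct (Req_dec (h x) 0); auto. exfalso; apply N; eauto.
Qed.

Lemma sumR_swap {A B} (k : A -> B -> R) (l : list A) (L : list B) :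
  sumR (map (fun y => sumR (map (fun x => k x y) l)) L) =
  sumR (map (fun x => sumR (map (fun y => k x y) L)) l).
Proof. induction l; simpl; [apply sumR_zero; auto|rewrite sumR_plus, IHl; auto]. Qed.

Lemma sumR_abs_bound {A} (h : A -> R) l M : (forall x, In x l -> Rabs (h x) <= M) ->
  Rabs (sumR (map h l)) <= INR (length l) * M.
Proof.
  induction l; intros H.
  - simpl. rewrite Rabs_R0. lra.
  - change (sumR (map h (a::l))) with (h a + sumR (map h l)).
    replace (INR (length (a::l))) with (INR (length l) + 1) by (simpl length; rewrite S_INR; ring).
    eapply Rle_trans; [apply Rabs_triang|].
    pose proof (H a (or_introl eq_refl)).
    assert (Rabs (sumR (map h l)) <= INR (length l) * M) by (apply IHl; intros; apply H; simpl; auto).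
    lra.
Qed.

Lemma sumR_support_indep {A} (l l' : list A) : NoDup l -> NoDup l' -> forall h : A -> R,
  support_in h l -> support_in h l' -> sumR (map h l) = sumR (map h l').
Proof.
  revert l'. induction l as [|x l IH]; intros l' N N' h H1 H2.
  - simpl. symmetry. apply sumR_zero. intros y _.
    destruct (Req_dec (h y) 0); auto. apply H1 in H. contradiction.
  - inversion N; subst. simpl.
    destruct (Req_dec (h x) 0) as [Z|NZ].
    + rewrite Z, Rplus_0_l. apply IH; auto. intros y Hy. destruct (H1 y Hy); auto. subst; contradiction.
    + destruct (in_split x l' (H2 x NZ)) as [l1 [l2 El]]. subst l'.
      pose proof (NoDup_remove_1 _ _ _ N') as N1. pose proof (NoDup_remove_2 _ _ _ N') as N2.
      rewrite map_app, sumR_app. simpl.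
      set (h' := fun y => if emd y x then 0 else h y).
      assert (S1 : sumR (map h l) = sumR (map h' l)).
      { apply sumR_ext. intros y Hy. unfold h'. destruct (emd y x); auto. subst; contradiction. }
      assert (S2 : sumR (map h (l1 ++ l2)) = sumR (map h' (l1 ++ l2))).
      { apply sumR_ext. intros y Hy. unfold h'. destruct (emd y x); auto. subst; contradiction. }
      rewrite map_app, sumR_app in S2.
      rewrite S1, (IH (l1 ++ l2) H4 N1 h'), <- S2; [ring| |].
      * intros y Hy. unfold h' in Hy. destruct (emd y x); [lra|]. destruct (H1 y Hy); auto. congruence.
      * intros y Hy. unfold h' in Hy. destruct (emd y x); [lra|]. pose proof (H2 y Hy) as Hin.
        apply in_app_or in Hin. apply in_or_app. destruct Hin as [|[|]]; auto. congruence.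
Qed.

Lemma sumR_indicator_in {A} (a : A) c l : NoDup l -> In a l ->
  sumR (map (fun y => if emd a y then c else 0) l) = c.
Proof.
  intros N Hin. destruct (in_split a l Hin) as [l1 [l2 El]]. subst l.
  pose proof (NoDup_remove_2 _ _ _ N) as N2.
  rewrite map_app, sumR_app. simpl. destruct (emd a a); [|congruence].
  rewrite !sumR_zero; [ring| |]; intros y Hy; destruct (emd a y); auto; subst;
    exfalso; apply N2; apply in_or_app; auto.
Qed.

Lemma sumR_indicator_nin {A} (a : A) c l : ~ In a l ->
  sumR (map (fun y => if emd a y then c else 0) l) = 0.
Proof. intros N. apply sumR_zero. intros y Hy. destruct (emd a y); auto. subst; contradiction. Qed.

Lemma sumR_indicator {A} (a : A) (h : A -> R) l : NoDup l -> support_in h l ->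
  sumR (map (fun y => if emd a y then h a else 0) l) = h a.
Proof.
  intros N S. destruct (in_dec emd a l) as [I|NI].
  - apply sumR_indicator_in; auto.
  - rewrite sumR_indicator_nin; auto. destruct (Req_dec (h a) 0); auto. exfalso; apply NI, S; auto.
Qed.

Definition pushsum {A B} (f : A -> B) (w : A -> R) (y : B) (l : list A) : R :=
  sumR (map (fun x => if emd (f x) y then w x else 0) l).

Lemma push_eq {A B} (f : A -> B) (w : A -> R) l y : NoDup l -> support_in w l ->
  push f w y = pushsum f w y l.
Proof.
  intros N S. unfold push.
  assert (Ex : exists r, exists l0 : list A, NoDup l0 /\ support_in w l0 /\
       r = sumR (map (fun x => if excluded_middle_informative (f x = y) then w x else 0) l0)).
  { exists (pushsum f w y l), l. auto. }
  destruct (epsilon_spec (inhabits 0) _ Ex) as [l0 [N0 [S0 E0]]].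
  rewrite E0. unfold pushsum, emd. apply sumR_support_indep; auto;
    intros x Hx; destruct (excluded_middle_informative (f x = y)); auto; lra.
Qed.

Lemma push_nz {A B} (f : A -> B) w l y : NoDup l -> support_in w l -> push f w y <> 0 ->
  exists x, In x l /\ f x = y /\ w x <> 0.
Proof.
  intros N S H. rewrite (push_eq f w l y N S) in H. unfold pushsum in H.
  destruct (sumR_nz _ _ H) as [x [Hx Hn]]. destruct (emd (f x) y); [|lra]. exists x; auto.
Qed.

Lemma push_pt {A B} (f : A -> B) E w : rips_pt E w -> rips_pt (rel_image f E) (push f w).
Proof.
  intros [Hnn [Hpair [l [N [S Hs]]]]].
  assert (PE : forall y, push f w y = pushsum f w y l) by (intros; apply push_eq; auto).
  split; [|split].
  - intros y. rewrite PE. apply sumR_nonneg. intros x _. destruct (emd (f x) y); [apply Hnn|lra].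
  - intros y1 y2 H1 H2. destruct (push_nz f w l y1 N S H1) as [x1 [_ [E1 W1]]].
    destruct (push_nz f w l y2 N S H2) as [x2 [_ [E2 W2]]]. exists x1, x2. auto.
  - exists (nodup emd (map f l)). split; [apply NoDup_nodup|split].
    + intros y Hy. destruct (push_nz f w l y N S Hy) as [x [Hx [Ex _]]].
      apply nodup_In. subst. apply in_map; auto.
    + rewrite <- Hs. rewrite (map_ext _ _ PE). unfold pushsum.
      rewrite (sumR_swap (fun x y => if emd (f x) y then w x else 0)).
      apply sumR_ext. intros x Hx. apply sumR_indicator_in; [apply NoDup_nodup|].
      apply nodup_In, in_map; auto.
Qed.

Lemma rips_has_pos {A} (E : A -> A -> Prop) w : rips_pt E w -> exists y, w y > 0.
Proof.
  intros [Hnn [_ [l [N [S Hs]]]]]. destruct (sumR_nz w l) as [y [_ Hy]]; [lra|].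
  exists y. pose proof (Hnn y). lra.
Qed.

Definition star {A} (E : A -> A -> Prop) (c : A) (w : A -> R) : Prop :=
  rips_pt E w /\ w c > 0.

Lemma star_open {A} (E : A -> A -> Prop) c : rips_open E (star E c).
Proof.
  split; [intros w []; auto|]. intros l Hl w [Pw Hw] Sw. exists (w c). split; auto.
  intros w' P' S' Hcl. split; auto. assert (In c l) by (apply Sw; lra).
  pose proof (Hcl c H) as Hb. apply Rabs_def2 in Hb. lra.
Qed.

Lemma push_continuous {A B} (f : A -> B) (E : A -> A -> Prop) V :
  rips_open (rel_image f E) V -> rips_open E (fun w => rips_pt E w /\ V (push f w)).
Proof.
  intros [HV1 HV2]. split; [tauto|]. intros l Hl w [Pw Vw] Sw.
  set (N := nodup emd l).
  assert (NN : NoDup N) by apply NoDup_nodup.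
  assert (HN : forall x, In x N <-> In x l) by (intros; apply nodup_In).
  assert (SN : forall w', support_in w' l -> support_in w' N) by (intros w' S x Hx; apply HN; auto).
  assert (Sv : forall w', support_in w' l -> support_in (push f w') (map f l)).
  { intros w' S y Hy. destruct (push_nz f w' N y NN (SN _ S) Hy) as [x [Hx [Ex _]]].
    subst. apply in_map, HN; auto. }
  assert (Hl' : forall y1 y2, In y1 (map f l) -> In y2 (map f l) -> rel_image f E y1 y2).
  { intros y1 y2 H1 H2. apply in_map_iff in H1. apply in_map_iff in H2.
    destruct H1 as [x1 [<- I1]]. destruct H2 as [x2 [<- I2]]. exists x1, x2; auto. }
  destruct (HV2 (map f l) Hl' (push f w) Vw (Sv _ Sw)) as [d [Hd Hd']].
  pose proof (pos_INR (length N)) as Hn.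
  exists (d / (INR (length N) + 1)). split; [apply Rdiv_lt_0_compat; lra|].
  intros w' Pw' Sw' Hc. split; auto. apply Hd'; [apply push_pt; auto|auto|].
  intros y Hy. rewrite (push_eq f w N y NN (SN _ Sw)), (push_eq f w' N y NN (SN _ Sw')).
  unfold pushsum. rewrite <- sumR_minus.
  eapply Rle_lt_trans; [apply sumR_abs_bound with (M := d / (INR (length N) + 1))|].
  - intros x Hx. destruct (emd (f x) y).
    + left. apply Hc, HN; auto.
    + replace (0 - 0) with 0 by ring. rewrite Rabs_R0. left; apply Rdiv_lt_0_compat; lra.
  - unfold Rdiv. rewrite <- Rmult_assoc. apply Rmult_lt_reg_r with (INR (length N) + 1); [lra|].
    rewrite Rmult_assoc, Rinv_l; lra.
Qed.

Section RipsCovering.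
Variables (A B : Type) (f : A -> B) (E : A -> A -> Prop).
Hypotheses
  (HRefl : forall a, E a a)
  (HInj : forall c a a', E c a -> E c a' -> f a = f a' -> a = a')
  (HTri : forall c a a', E c a -> E c a' -> rel_image f E (f a) (f a') -> E a a')
  (HLift : forall c y, rel_image f E (f c) y -> exists a, E c a /\ f a = y)
  (HSurj : forall y, exists a, f a = y).

Lemma push_on_star w c x : rips_pt E w -> w c <> 0 -> E c x -> push f w (f x) = w x.
Proof.
  intros [Hnn [Hpair [l [N [S Hs]]]]] Hc Hx. rewrite (push_eq f w l (f x) N S). unfold pushsum.
  rewrite <- (sumR_indicator x w l N S). apply sumR_ext. intros x' Hx'.
  destruct (emd (f x') (f x)) as [Ef|Nf]; destruct (emd x x'); subst; auto; try congruence.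
  destruct (Req_dec (w x') 0) as [Z|NZ]; auto.
  exfalso. apply n. symmetry. apply (HInj c); auto.
Qed.

Definition lift_vertex (c : A) (y : B) : A :=
  epsilon (inhabits c) (fun a => E c a /\ f a = y).

Lemma lift_vertex_spec c y : rel_image f E (f c) y ->
  E c (lift_vertex c y) /\ f (lift_vertex c y) = y.
Proof. intros H. apply (epsilon_spec (inhabits c) (fun a => E c a /\ f a = y)), HLift, H. Qed.

Lemma lift_vertex_f c x : E c x -> lift_vertex c (f x) = x.
Proof.
  intros Hx. destruct (lift_vertex_spec c (f x)) as [A1 A2]; [exists c, x; auto|].
  apply (HInj c); auto.
Qed.

Definition lift_point (c : A) (v : B -> R) : A -> R :=
  fun x => if excluded_middle_informative (E c x) then v (f x) else 0.

Lemma lift_point_nz c v x : lift_point c v x <> 0 -> E c x /\ v (f x) <> 0.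
Proof. unfold lift_point. destruct (excluded_middle_informative (E c x)); auto; lra. Qed.

Lemma lift_point_vertex c v y : rel_image f E (f c) y -> lift_point c v (lift_vertex c y) = v y.
Proof.
  intros Hy. destruct (lift_vertex_spec c y Hy) as [A1 A2]. unfold lift_point.
  destruct (excluded_middle_informative (E c (lift_vertex c y))); [congruence|contradiction].
Qed.

Lemma lift_point_spec c v : rips_pt (rel_image f E) v -> v (f c) <> 0 ->
  rips_pt E (lift_point c v) /\ push f (lift_point c v) = v.
Proof.
  intros [Hnn [Hpair [s [N [S Hs]]]]] Hc.
  assert (Hadj : forall y, v y <> 0 -> rel_image f E (f c) y) by auto.
  set (s0 := filter (fun y => if Req_EM_T (v y) 0 then false else true) s).
  assert (Ins0 : forall y, In y s0 <-> v y <> 0).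
  { intros y. unfold s0. rewrite filter_In. destruct (Req_EM_T (v y) 0); split.
    - intros [_ F]; discriminate.
    - contradiction.
    - auto.
    - intros Hy; split; [apply S|]; auto. }
  assert (N0 : NoDup s0) by (apply NoDup_filter; auto).
  set (ls := map (lift_vertex c) s0).
  assert (NL : NoDup ls).
  { apply NoDup_map_NoDup_ForallPairs; auto. intros a b Ha Hb Hab.
    rewrite <- (proj2 (lift_vertex_spec c a (Hadj _ (proj1 (Ins0 a) Ha)))).
    rewrite <- (proj2 (lift_vertex_spec c b (Hadj _ (proj1 (Ins0 b) Hb)))). congruence. }
  assert (SL : support_in (lift_point c v) ls).
  { intros x Hx. destruct (lift_point_nz c v x Hx) as [Ex Hv].
    rewrite <- (lift_vertex_f c x Ex). apply in_map, Ins0; auto. }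
  split; [split; [|split]|].
  - intros x. unfold lift_point. destruct (excluded_middle_informative (E c x)); [apply Hnn|lra].
  - intros x x' Hx Hx'. destruct (lift_point_nz c v x Hx) as [E1 V1].
    destruct (lift_point_nz c v x' Hx') as [E2 V2]. apply (HTri c); auto.
  - exists ls. split; auto. split; auto. unfold ls. rewrite map_map, <- Hs.
    rewrite (sumR_ext _ v s0) by (intros y Hy; apply lift_point_vertex, Hadj, Ins0; auto).
    apply sumR_support_indep; auto. intros y Hy. apply Ins0; auto.
  - apply functional_extensionality. intros y. rewrite (push_eq f _ _ y NL SL). unfold pushsum, ls.
    rewrite map_map, <- (sumR_indicator y v s0) by (auto; intros y' Hy'; apply Ins0; auto).
    apply sumR_ext. intros y' Hy'. pose proof (Hadj _ (proj1 (Ins0 y') Hy')) as Ha.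
    rewrite lift_point_vertex, (proj2 (lift_vertex_spec c y' Ha)); auto.
    destruct (emd y' y); destruct (emd y y'); subst; congruence.
Qed.

Lemma star_push_injective c w w' : star E c w -> star E c w' -> push f w = push f w' -> w = w'.
Proof.
  intros [Pw Hw] [Pw' Hw'] Hp. apply functional_extensionality. intros x.
  assert (Hx : w x <> 0 \/ w' x <> 0 -> E c x).
  { intros [Nx|Nx]; [destruct Pw as [_ [Hpair _]]|destruct Pw' as [_ [Hpair _]]];
      apply Hpair; lra. }
  destruct (Req_dec (w x) 0) as [Z|NZ]; [destruct (Req_dec (w' x) 0) as [Z'|NZ']; [congruence|]|].
  all: rewrite <- (push_on_star w c x Pw ltac:(lra) (Hx ltac:(tauto))),
               <- (push_on_star w' c x Pw' ltac:(lra) (Hx ltac:(tauto))); congruence.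
Qed.

Lemma star_push_image c v : star (rel_image f E) (f c) v <-> image (push f) (star E c) v.
Proof.
  split.
  - intros [Pv Hv]. destruct (lift_point_spec c v Pv ltac:(lra)) as [L1 L2].
    exists (lift_point c v). split; auto. split; auto. unfold lift_point.
    destruct (excluded_middle_informative (E c c)); [lra|]. exfalso; auto.
  - intros [w [[Pw Hw] <-]]. split; [apply push_pt; auto|].
    rewrite (push_on_star w c c Pw ltac:(lra) (HRefl c)). auto.
Qed.

Lemma star_push_open c W : rips_open E W -> (forall w, W w -> star E c w) ->
  rips_open (rel_image f E) (image (push f) W).
Proof.
  intros [HW1 HW2] HWU. split; [intros v' [w [Ww <-]]; apply push_pt, HW1; auto|].
  intros l' Hl' v' [w [Ww <-]] Sv'. destruct (HWU w Ww) as [Pw Hwc].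
  assert (Ic : In (f c) l').
  { apply Sv'. rewrite (push_on_star w c c Pw ltac:(lra) (HRefl c)). lra. }
  assert (Hadj : forall y, In y l' -> rel_image f E (f c) y) by auto.
  assert (Hl'' : forall x1 x2, In x1 (map (lift_vertex c) l') -> In x2 (map (lift_vertex c) l') -> E x1 x2).
  { intros x1 x2 H1 H2. apply in_map_iff in H1. apply in_map_iff in H2.
    destruct H1 as [y1 [<- I1]]. destruct H2 as [y2 [<- I2]].
    destruct (lift_vertex_spec c y1 (Hadj _ I1)) as [A1 B1].
    destruct (lift_vertex_spec c y2 (Hadj _ I2)) as [A2 B2].
    apply (HTri c); auto. rewrite B1, B2. apply Hl'; auto. }
  assert (Sw : support_in w (map (lift_vertex c) l')).
  { intros x Hx. assert (Ex : E c x) by (destruct Pw as [_ [Hpair _]]; apply Hpair; lra).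
    rewrite <- (lift_vertex_f c x Ex). apply in_map, Sv'.
    rewrite (push_on_star w c x Pw ltac:(lra) Ex). auto. }
  destruct (HW2 _ Hl'' w Ww Sw) as [d [Hd Hd']].
  exists (Rmin d (w c)). split; [apply Rmin_pos; lra|].
  intros v'' P'' S'' Hc''. pose proof (Rmin_l d (w c)). pose proof (Rmin_r d (w c)).
  assert (Pos : v'' (f c) <> 0).
  { pose proof (Hc'' (f c) Ic) as Hb. rewrite (push_on_star w c c Pw ltac:(lra) (HRefl c)) in Hb.
    apply Rabs_def2 in Hb. lra. }
  destruct (lift_point_spec c v'' P'' Pos) as [L1 L2].
  exists (lift_point c v''). split; auto. apply Hd'; auto.
  - intros x Hx. destruct (lift_point_nz c v'' x Hx) as [Ex Vx].
    rewrite <- (lift_vertex_f c x Ex). apply in_map, S'', Vx.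
  - intros x Hx. apply in_map_iff in Hx. destruct Hx as [y [<- Iy]].
    rewrite lift_point_vertex by auto.
    destruct (lift_vertex_spec c y (Hadj _ Iy)) as [A1 B1].
    rewrite <- (push_on_star w c _ Pw ltac:(lra) A1), B1. pose proof (Hc'' y Iy). lra.
Qed.

Lemma star_preimage y0 w : rips_pt E w /\ star (rel_image f E) y0 (push f w) <->
  exists c, f c = y0 /\ star E c w.
Proof.
  split.
  - intros [Pw [_ Vw]]. pose proof Pw as [Hnn [Hpair [l [N [S Hs]]]]].
    destruct (push_nz f w l y0 N S ltac:(lra)) as [x [_ [Ex Wx]]].
    exists x. split; auto. split; auto. pose proof (Hnn x); lra.
  - intros [c [<- [Pw Hw]]]. split; auto. split; [apply push_pt; auto|].
    rewrite (push_on_star w c c Pw ltac:(lra) (HRefl c)). auto.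
Qed.

Lemma star_lifts_disjoint c c' w : f c = f c' -> star E c w -> star E c' w -> c = c'.
Proof.
  intros Hf [Pw Hw] [_ Hw']. apply (HInj c); auto. destruct Pw as [_ [Hpair _]]. apply Hpair; lra.
Qed.

(* The sheets over the star of y0 are the stars of the lifts of y0. *)
Theorem rips_covering_criterion :
  top_covering (rips_pt E) (rips_open E) (rips_pt (rel_image f E))
    (rips_open (rel_image f E)) (push f).
Proof.
  split; [|split; [|split]].
  - intros w Hw. apply push_pt; auto.
  - intros v Hv. destruct (rips_has_pos _ _ Hv) as [y0 Hy0]. destruct (HSurj y0) as [c <-].
    exists (lift_point c v). apply (lift_point_spec c v Hv). lra.
  - apply push_continuous.
  - intros v Hv. destruct (rips_has_pos _ _ Hv) as [y0 Hy0].
    exists (star (rel_image f E) y0). split; [apply star_open|split; [split; auto|]].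
    exists (fun U => exists c, f c = y0 /\ U = star E c). split; [|split].
    + intros U [c [<- ->]]. split; [apply star_open|split; [|split]].
      * apply star_push_injective.
      * apply star_push_image.
      * apply star_push_open.
    + intros w. rewrite star_preimage. split.
      * intros [c [Hc Sw]]. exists (star E c). eauto.
      * intros [U [[c [Hc ->]] Sw]]. eauto.
    + intros U U' [c [Hc ->]] [c' [Hc' ->]] [x [Hx Hx']].
      replace c' with c by (apply (star_lifts_disjoint c c' x); auto; congruence). tauto.
Qed.
End RipsCovering.

Lemma small_exists (X : UniformSpace) (G : X -> X -> Prop) : ent X G -> exists E0, small X G E0.
Proof.
  intros HG. destruct (ent_comp X G HG) as [G1 [HG1 C1]].
  destruct (ent_comp X G1 HG1) as [G2 [HG2 C2]].
  exists (fun x y => G2 x y /\ G2 y x). split; [apply ent_inter; auto; apply ent_sym; auto|].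
  split; [intros x y [? ?]; split; auto|].
  intros x y z u v [Hxy _] [Hyz _] [Hzu _] [Huv _].
  apply (C1 x z v); [apply C2 with y|apply C2 with u]; auto.
Qed.

Lemma small_sub (X : UniformSpace) (G E0 : X -> X -> Prop) x y : small X G E0 -> E0 x y -> G x y.
Proof.
  intros Hs Hxy. pose proof Hs as [HE [Hsym _]].
  apply (small_two_balls X G E0 x y x y y); auto; apply ent_refl; auto.
Qed.

Lemma rel_image_mono {A B} (f : A -> B) (E E' : A -> A -> Prop) :
  (forall x y, E x y -> E' x y) -> forall y1 y2, rel_image f E y1 y2 -> rel_image f E' y1 y2.
Proof. intros H y1 y2 [a [b [Hab [E1 E2]]]]. exists a, b. auto. Qed.

Section Sufficiency.
Variables (X : UniformSpace) (x0 : X).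
Hypotheses (PC : path_connected X) (UL : unif_loc_path_connected X).

(* pi(E^* ) is an entourage: a short path from x to a nearby point y
   extends a path from x0 to x. *)
Lemma pi_Estar_ent E1 : ent X E1 -> ent X (rel_image (piX X x0) (Estar X x0 E1)).
Proof.
  intros HE1. destruct (UL E1 HE1) as [F [HF HFp]].
  apply ent_mono with F; auto. intros x y Fxy.
  destruct (HFp x x y (ent_refl _ F HF x) Fxy) as [g [[Hg [G0 G1]] Hgb]].
  destruct (piX_surjective X x0 PC x) as [C HC].
  destruct (Estar_extend X x0 E1 C g x) as [D [HCD [HD _]]]; [split; [auto|split; congruence]|auto|].
  exists C, D. split; auto. split; congruence.
Qed.

Lemma piX_generates : generates (ent_tilde X x0) (ent X) (piX X x0).
Proof.
  split; [|split].
  - apply piX_surjective; auto.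
  - intros E [E1 [HE1 Hsub]]. eapply ent_mono; [apply (pi_Estar_ent E1); auto|].
    apply rel_image_mono; auto.
  - intros F HF. destruct (small_exists X F HF) as [E0 Hs].
    exists (Estar X x0 E0). split; [exists E0; split; [apply Hs|auto]|].
    intros y1 y2 [C [D [HCD [<- <-]]]].
    destruct (Estar_difference X x0 E0 C D HCD) as [z [g [[Hg [<- <-]] [Hz _]]]].
    apply (small_two_balls X F E0 z z _ (g 1)); auto.
Qed.

Lemma pi_rips_covering F E0 : simply_connected_at_scale X F -> small X F E0 ->
  top_covering (rips_pt (Estar X x0 E0)) (rips_open (Estar X x0 E0))
    (rips_pt (rel_image (piX X x0) (Estar X x0 E0)))
    (rips_open (rel_image (piX X x0) (Estar X x0 E0))) (push (piX X x0)).
Proof.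
  intros HS Hs. pose proof Hs as [HE0 _].
  apply rips_covering_criterion.
  - intros; apply Estar_refl; auto.
  - intros c a a' Ha Ha' Hp. apply (Estar_pi_injective X x0 F E0); auto.
    apply (Estar_triangle X x0 F E0 HS Hs c); auto.
    rewrite Hp. exists a', a'. split; auto. apply Estar_refl; auto.
  - intros c a a'. apply (Estar_triangle X x0 F E0 HS Hs c).
  - intros c y [D [D' [HDD [P1 P2]]]].
    destruct (Estar_difference X x0 E0 D D' HDD) as [z [g [[Hg [G0 G1]] [Hz _]]]].
    destruct (Estar_extend X x0 E0 c g z) as [C' [HC' [HP _]]]; [split; [auto|split; congruence]|auto|].
    exists C'. split; congruence.
  - apply piX_surjective; auto.
Qed.
End Sufficiency.

Lemma uniform_covering_of_Poincare (X : UniformSpace) (x0 : X) :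
  uniform_Poincare X -> uniform_covering (ent_tilde X x0) (ent X) (piX X x0).
Proof.
  intros [PC [UL [Fs [HFs HS]]]]. split; [apply piX_generates; auto|].
  intros FT [EF [HEF HFT]].
  destruct (small_exists X (fun x y => Fs x y /\ EF x y)) as [E0 Hs]; [apply ent_inter; auto|].
  assert (HsF : small X Fs E0).
  { destruct Hs as [H1 [H2 H3]]. split; [|split]; auto. intros; eapply H3; eauto. }
  exists (Estar X x0 E0). split; [exists E0; split; [apply Hs|auto]|]. split.
  - intros C D H. apply HFT. eapply Estar_mono; [|exact H]. intros x y Hxy.
    apply (small_sub X _ E0 x y Hs Hxy).
  - apply (pi_rips_covering X x0 PC Fs); auto.
Qed.

Section Necessity.
Variables (X : UniformSpace) (x0 : X).

(* Two points are joined through x0 by representatives of their lifts. *)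
Lemma path_connected_of_surjective :
  (forall y, exists C : Xtilde X x0, piX X x0 C = y) -> path_connected X.
Proof.
  intros Hs x y. destruct (Hs x) as [C <-]. destruct (Hs y) as [D <-].
  pose proof (rep_mem X x0 C) as RC. pose proof (rep_mem X x0 D) as RD.
  destruct (mem_char X x0 _ _ RC) as [C1 C0]. destruct (mem_char X x0 _ _ RD) as [D1 D0].
  exists (pconcat (rev_path (rep X x0 C)) (rep X x0 D)).
  split; [apply cont_concat; auto; autorewrite with pth; congruence|].
  autorewrite with pth. split; apply mem_end; auto.
Qed.

(* If every pi(E^* ) is an entourage then X is uniformly locally path
   connected: points of a pi(E1^* )-ball are joined through the ball centre. *)
Lemma ulpc_of_pi_ent :
  (forall E, ent_tilde X x0 E -> ent X (rel_image (piX X x0) E)) -> unif_loc_path_connected X.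
Proof.
  intros Hent E HE. destruct (ent_comp X E HE) as [E1' [HE1' Hc]].
  set (E1 := fun x y => E1' x y /\ E1' y x).
  assert (HE1 : ent X E1) by (apply ent_inter; auto; apply ent_sym; auto).
  exists (rel_image (piX X x0) (Estar X x0 E1)). split; [apply Hent; exists E1; split; auto|].
  assert (K : forall x y, rel_image (piX X x0) (Estar X x0 E1) x y ->
            exists z g, path_from X x y g /\ forall t, I01 t -> E1 z (g t)).
  { intros x y [C [D [HCD [<- <-]]]].
    destruct (Estar_difference X x0 E1 C D HCD) as [z [g [Hg [Hz _]]]]. eauto. }
  assert (Near : forall x y z g u, path_from X x y g -> (forall t, I01 t -> E1 z (g t)) ->
            I01 u -> E x (g u)).
  { intros x y z g u [_ [G0 _]] Hz Hu. apply Hc with z; [rewrite <- G0; apply (Hz 0)|apply Hz]; auto. }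
  intros x y z Hy Hz. destruct (K x y Hy) as [zy [gy [Py By]]]. destruct (K x z Hz) as [zz [gz [Pz Bz]]].
  pose proof Py as [Cy [Y0 Y1]]. pose proof Pz as [Cz [Z0 Z1]].
  exists (pconcat (rev_path gy) gz). split.
  - split; [apply cont_concat; auto; autorewrite with pth; congruence|].
    autorewrite with pth. auto.
  - apply concat_forall; [apply rev_forall|]; intros u Hu; unfold ball; eauto.
Qed.
End Necessity.

Lemma interval_locally_constant (Q : R -> Prop) :
  (forall t0, I01 t0 -> exists d, 0 < d /\ forall t, I01 t -> Rabs (t - t0) < d -> (Q t <-> Q t0)) ->
  Q 0 -> Q 1.
Proof.
  intros Hloc HQ0. apply NNPP. intros HQ1.
  set (cl := fun t => Rmax 0 (Rmin 1 t)).
  assert (cl_I01 : forall t, I01 (cl t)).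
  { intros t. unfold cl, I01, Rmax, Rmin. destruct (Rle_dec 1 t); destruct (Rle_dec 0 _); lra. }
  assert (cl_lip : forall t t0, Rabs (cl t - cl t0) <= Rabs (t - t0)).
  { intros t t0. unfold cl, Rmax, Rmin. repeat (destruct (Rle_dec _ _)); rabs_elim; lra. }
  assert (cl_id : forall t, I01 t -> cl t = t).
  { unfold cl, I01, Rmax, Rmin. intros t Ht. repeat (destruct (Rle_dec _ _)); lra. }
  (* the indicator of Q along the clamped parameter is locally constant, hence
     continuous, and would have to take the value 1/2 between 0 and 1 *)
  set (chi := fun t => if excluded_middle_informative (Q (cl t)) then 1 else 0).
  assert (Cchi : continuity (fun t => 1/2 - chi t)).
  { intros x eps Heps. destruct (Hloc (cl x) (cl_I01 x)) as [d [Hd Hd']]. exists d; split; auto.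
    intros y [_ Hyx]. simpl in *. unfold Rdist in *.
    assert (Heq : chi y = chi x).
    { unfold chi. pose proof (Hd' (cl y) (cl_I01 y) ltac:(pose proof (cl_lip y x); lra)).
      destruct (excluded_middle_informative (Q (cl y))), (excluded_middle_informative (Q (cl x)));
        tauto. }
    rewrite Heq. replace (1/2 - chi x - (1/2 - chi x)) with 0 by ring. rewrite Rabs_R0; lra. }
  assert (H0 : chi 0 = 1).
  { unfold chi. rewrite cl_id; auto. destruct (excluded_middle_informative (Q 0)); tauto. }
  assert (H1 : chi 1 = 0).
  { unfold chi. rewrite cl_id; auto. destruct (excluded_middle_informative (Q 1)); tauto. }
  destruct (IVT (fun t => 1/2 - chi t) 0 1 Cchi ltac:(lra) ltac:(cbv beta; rewrite H0; lra)
              ltac:(cbv beta; rewrite H1; lra)) as [z [_ Hz]].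
  unfold chi in Hz. destruct (excluded_middle_informative _); lra.
Qed.

(* A covering map of Rips complexes induced by f cannot identify the two ends
   of an edge: the edge would be a path joining two points of one sheet with
   the same image. *)
Section EdgesDoNotCollapse.
Variables (A B : Type) (f : A -> B) (E : A -> A -> Prop) (C C' : A).
Hypotheses (Hne : C <> C') (ECC : E C C) (ECC' : E C C') (EC'C : E C' C) (EC'C' : E C' C').

Definition edge_point (t : R) : A -> R :=
  fun c => (if emd c C then 1 - t else 0) + (if emd c C' then t else 0).

Lemma edge_point_C t : edge_point t C = 1 - t.
Proof. unfold edge_point. destruct (emd C C), (emd C C'); congruence || ring. Qed.

Lemma edge_point_C' t : edge_point t C' = t.
Proof. unfold edge_point. destruct (emd C' C), (emd C' C'); congruence || ring. Qed.

Lemma edge_point_support t : support_in (edge_point t) [C; C'].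
Proof.
  intros c Hc. unfold edge_point in Hc. simpl.
  destruct (emd c C), (emd c C'); auto. lra.
Qed.

Lemma edge_clique : forall c c', In c [C; C'] -> In c' [C; C'] -> E c c'.
Proof. intros c c' H1 H2. simpl in H1, H2. destruct H1 as [<-|[<-|[]]], H2 as [<-|[<-|[]]]; auto. Qed.

Lemma edge_point_rips t : I01 t -> rips_pt E (edge_point t).
Proof.
  intros Ht. unfold I01 in Ht. split; [|split].
  - intros c. unfold edge_point. destruct (emd c C), (emd c C'); lra.
  - intros c c' H1 H2. apply edge_clique; apply (edge_point_support t); auto.
  - exists [C; C']. split; [constructor; [simpl; intuition|constructor; [simpl; auto|constructor]]|].
    split; [apply edge_point_support|]. simpl. rewrite edge_point_C, edge_point_C'. ring.
Qed.

Lemma edge_point_close t t0 : forall c, In c [C; C'] ->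
  Rabs (edge_point t c - edge_point t0 c) <= Rabs (t - t0).
Proof.
  intros c Hc. simpl in Hc. destruct Hc as [<-|[<-|[]]].
  - rewrite !edge_point_C. replace (1 - t - (1 - t0)) with (-(t - t0)) by ring.
    rewrite Rabs_Ropp. lra.
  - rewrite !edge_point_C'. lra.
Qed.

Lemma edge_point_push t : f C = f C' ->
  push f (edge_point t) = fun y => if emd (f C) y then 1 else 0.
Proof.
  intros Hf. apply functional_extensionality. intros y.
  assert (N : NoDup [C; C']) by (constructor; [simpl; intuition|constructor; [simpl; auto|constructor]]).
  rewrite (push_eq f _ [C; C'] y N (edge_point_support t)).
  unfold pushsum. simpl. rewrite edge_point_C, edge_point_C', <- Hf.
  destruct (emd (f C) y); ring.
Qed.

(* The sheet containing C also contains C' by connectedness of the edge,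
   contradicting injectivity of push f on sheets. *)
Lemma covering_separates_edge :
  top_covering (rips_pt E) (rips_open E) (rips_pt (rel_image f E)) (rips_open (rel_image f E))
    (push f) -> f C <> f C'.
Proof.
  intros [_ [_ [_ Hloc]]] Hf.
  set (v := fun y => if emd (f C) y then 1 else 0).
  assert (Pv : rips_pt (rel_image f E) v).
  { unfold v. rewrite <- (edge_point_push 0 Hf). apply push_pt, edge_point_rips; auto. }
  destruct (Hloc v Pv) as [V [_ [Vv [S [HS [Hcov Hdisj]]]]]].
  assert (InS : forall t, I01 t -> exists U, S U /\ U (edge_point t)).
  { intros t Ht. apply Hcov. split; [apply edge_point_rips; auto|]. rewrite edge_point_push; auto. }
  destruct (InS 0 I01_0) as [U0 [SU0 U0e]].
  assert (U01 : U0 (edge_point 1)).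
  { apply (interval_locally_constant (fun t => U0 (edge_point t))); auto.
    intros t0 Ht0. destruct (InS t0 Ht0) as [U1 [SU1 U1e]].
    destruct (HS U1 SU1) as [[_ Ho] _].
    destruct (Ho _ edge_clique _ U1e (edge_point_support t0)) as [d [Hd Hd']].
    exists d. split; auto. intros t Ht Htt0.
    assert (U1t : U1 (edge_point t)).
    { apply Hd'; [apply edge_point_rips; auto|apply edge_point_support|].
      intros c Hc. pose proof (edge_point_close t t0 c Hc). lra. }
    split; intros HU.
    - apply (Hdisj U0 U1 SU0 SU1); eauto.
    - apply (Hdisj U1 U0 SU1 SU0); eauto. }
  destruct (HS U0 SU0) as [_ [Hinj _]].
  assert (E01 : edge_point 0 = edge_point 1) by (apply Hinj; auto; rewrite !edge_point_push; auto).
  pose proof (f_equal (fun w => w C) E01) as H. simpl in H. rewrite !edge_point_C in H. lra.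
Qed.
End EdgesDoNotCollapse.

(* If pi_X is a uniform covering map, X is uniformly semi-locally simply
   connected: a small loop at pi(C) lifts to a class E^*-adjacent to C with
   the same projection, which must be C itself. *)
Lemma uslsc_of_uniform_covering (X : UniformSpace) (x0 : X) :
  uniform_covering (ent_tilde X x0) (ent X) (piX X x0) -> unif_semiloc_simply_connected X.
Proof.
  intros [[Hs _] Hcov].
  destruct (Hcov (fun _ _ => True)) as [E [[E1 [HE1 Hsub]] [_ Htop]]];
    [exists (fun _ _ => True); split; [apply ent_full|auto]|].
  exists E1. split; auto. intros x al [Ca [A0 A1]] Hball.
  destruct (Hs x) as [C HC].
  pose proof (rep_mem X x0 C) as RC. destruct (mem_char X x0 C _ RC) as [Cb B0].
  pose proof (mem_end X x0 C _ RC) as B1.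
  destruct (Estar_extend X x0 E1 C al x) as [C' [HE [HP' Hm]]];
    [split; [auto|split; congruence]|exact Hball|].
  assert (Heq : C = C').
  { apply NNPP. intros Hne. apply (covering_separates_edge _ _ (piX X x0) E C C' Hne).
    - apply Hsub, Estar_refl; auto.
    - apply Hsub; auto.
    - apply Hsub, Estar_sym; auto.
    - apply Hsub, Estar_refl; auto.
    - exact Htop.
    - congruence. }
  subst C'. pose proof (mem_hom X x0 C _ _ Hm RC) as Hh.
  eapply hom_trans; [apply hom_sym, (hom_cancel_prefix X (rep X x0 C) al); auto; congruence|].
  eapply hom_trans; [apply hom_concat; [autorewrite with pth; congruence|apply hom_refl; auto|exact Hh]|].
  replace x with (rep X x0 C 1) by congruence. apply hom_cancel_l; auto.
Qed.

Theorem mainTheorem6 (X : UniformSpace) (x0 : X) :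
  uniform_covering (ent_tilde X x0) (ent X) (piX X x0) <-> uniform_Poincare X.
Proof.
  split.
  - intros Hcov. pose proof Hcov as [[Hsurj [Hent _]] _].
    split; [|split].
    + apply (path_connected_of_surjective X x0 Hsurj).
    + apply (ulpc_of_pi_ent X x0 Hent).
    + apply (uslsc_of_uniform_covering X x0 Hcov).
  - apply uniform_covering_of_Poincare.
Qed.
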